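(* Let $n\ge 1$ be an integer and let $x,\tilde x\in\{0,1\}^n$ with $|x|_1\le|\tilde x|_1$. Let $y$ and $\tilde y$ be random points of $\{0,1\}^n$ obtained from $x$ and $\tilde x$, respectively, by flipping each bit independently with probability $1/n$. Then for every $j\in\{0,\dots,|x|_1-1\}$, $$\Pr\big[|y|_1=j\big]\ge\Pr\big[|\tilde y|_1=j\big].$$
   Context: $|x|_1=\sum_{i=1}^n x_i$ denotes the number of one-bits of $x\in\{0,1\}^n$. *)

From HB Require Import structures.
From mathcomp Require Import all_boot all_order all_algebra.
Set Implicit Arguments. Unset Strict Implicit. Unset Printing Implicit Defensive.
Import Order.TTheory GRing.Theory Num.Theory.

Definition ones (n : nat) (x : {ffun 'I_n -> bool}) : nat := #|[set i | x i]|.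

Local Open Scope ring_scope.

Definition mut_prob (R : numFieldType) (n : nat) (x y : {ffun 'I_n -> bool}) : R :=
  \prod_(i < n) (if x i == y i then 1 - n%:R^-1 else n%:R^-1).

Definition prob_ones (R : numFieldType) (n : nat) (x : {ffun 'I_n -> bool}) (j : nat) : R :=
  \sum_(y : {ffun 'I_n -> bool} | ones y == j) mut_prob R x y.

From HB Require Import structures.
From mathcomp Require Import all_boot all_order all_algebra ring.
Import Order.TTheory GRing.Theory Num.Theory.
Set Implicit Arguments. Unset Strict Implicit.
Local Open Scope ring_scope.

(* The number of one-bits after mutating x with rate p has generating function
   A^|x| B^(n-|x|), with A = p + (1-p)X (a one-bit) and B = (1-p) + pX (a zero-bit).
   Turning a zero-bit of x into a one-bit replaces a factor B by A in S A^a B^b,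
   which lowers the j-th coefficient by (1 - 2p)(S_j - S_(j-1)); this is nonnegative
   because the coefficients of S = A^a B^b increase up to index a as soon as
   (a+1)p <= 1, which holds for p = 1/n. *)

Definition linX (R : nzRingType) (c d : R) : {poly R} := c%:P + d%:P * 'X.

Section Coefficients.
Variable R : comNzRingType.

Lemma coef_mul_linX (g : {poly R}) (c d : R) k :
  (g * linX c d)`_k = c * g`_k + (if k is k'.+1 then d * g`_k' else 0).
Proof.
rewrite /linX mulrDr coefD coefMC mulrA coefMX coefMC.
by case: k => [|k] /=; rewrite ?addr0 mulrC // [_ * d]mulrC.
Qed.

Lemma coef_linX_exp (c d : R) m k :
  (linX c d ^+ m)`_k = 'C(m, k)%:R * d ^+ k * c ^+ (m - k).
Proof.
elim: m k => [|m IHm] k.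
  by rewrite expr0 coef1 bin0n; case: k => [|k]; rewrite ?expr0 ?mulr1 /= ?mul0r.
rewrite exprS mulrC coef_mul_linX; case: k => [|k].
  by rewrite IHm !bin0 !mul1r subn0 exprS addr0.
rewrite !IHm binS natrD mulrDl mulrDl subSS; congr (_ + _).
  have [lt_km | le_mk] := ltnP k m.
    by rewrite -(subnSK lt_km) !exprS mulrCA mulrA.
  by rewrite bin_small ?ltnS // !mul0r mulr0.
by rewrite exprS !mulrA [d * _]mulrC.
Qed.

Lemma prod_ffun_if n (x : {ffun 'I_n -> bool}) (A B : R) :
  \prod_(i < n) (if x i then A else B) = A ^+ ones x * B ^+ (n - ones x).
Proof.
rewrite (bigID (mem [set i | x i])) /=.
rewrite (eq_bigr (fun=> A)) => [|i]; last by rewrite inE => ->.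
rewrite [X in _ * X](eq_bigr (fun=> B)) => [|i]; last by rewrite inE => /negbTE ->.
rewrite !prodr_const; congr (_ * _ ^+ _).
have <- : #|~: [set i | x i]| = #|[predC [set i | x i]]|.
  by apply: eq_card => i; rewrite !inE.
by rewrite /ones -(addKn #|[set i | x i]| #|~: _|) cardsC card_ord.
Qed.

End Coefficients.

Lemma prob_ones_coef (R : numFieldType) n (x : {ffun 'I_n -> bool}) j :
  let p := (n%:R : R)^-1 in
  prob_ones R x j = (linX p (1 - p) ^+ ones x * linX (1 - p) p ^+ (n - ones x))`_j.
Proof.
move=> p; rewrite -prod_ffun_if.
have -> : \prod_(i < n) (if x i then linX p (1 - p) else linX (1 - p) p) =
    \prod_(i < n) \sum_(b : bool) (if x i == b then 1 - p else p)%:P * 'X^b.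
  apply: eq_bigr => i _; rewrite big_bool /= /linX expr1 expr0 mulr1.
  by case: (x i); rewrite addrC.
rewrite bigA_distr_bigA coef_sum /prob_ones big_mkcond /=.
apply: eq_bigr => y _.
rewrite big_split /= -rmorph_prod prodrXr coefCM coefXn.
have -> : (\sum_(i < n) y i)%N = ones y.
  by rewrite /ones -sum1_card [RHS]big_mkcond; apply: eq_bigr => i _; rewrite inE.
by rewrite eq_sym; case: (_ == _); rewrite ?mulr1 ?mulr0.
Qed.

Section Monotonicity.
Variable R : numDomainType.
Implicit Types (g : {poly R}) (c d p : R).

Definition coefs_ge0 g := forall k, 0 <= g`_k.

Definition coefs_nondecr_upto g m := forall k, (k < m)%N -> g`_k <= g`_k.+1.

Lemma coefs_ge0_mul_linX g c d :
  coefs_ge0 g -> 0 <= c -> 0 <= d -> coefs_ge0 (g * linX c d).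
Proof.
move=> g_ge0 c_ge0 d_ge0 k; rewrite coef_mul_linX.
by case: k => [|k]; rewrite ?addr0 ?addr_ge0 ?mulr_ge0.
Qed.

Lemma coefs_nondecr_mul_linX g m c d :
  coefs_ge0 g -> coefs_nondecr_upto g m -> 0 <= c -> 0 <= d ->
  coefs_nondecr_upto (g * linX c d) m.
Proof.
move=> g_ge0 g_incr c_ge0 d_ge0 [|k] lt_km; rewrite !coef_mul_linX.
  by rewrite addr0 -[X in X <= _]addr0 lerD ?mulr_ge0 // ler_wpM2l // g_incr.
by rewrite lerD // ler_wpM2l // g_incr // ltnW.
Qed.

Lemma binomial_ratio_ge p a k : 0 <= p -> a.+1%:R * p <= 1 -> (k < a)%N ->
  'C(a, k)%:R * p <= 'C(a, k.+1)%:R * (1 - p).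
Proof.
move=> p_ge0 ap_le1 lt_ka.
have kp_le : k.+1%:R * p <= (a - k)%:R * (1 - p).
  rewrite mulrBr mulr1 lerBrDr -mulrDl -natrD addSn subnKC; last exact: ltnW.
  by apply: le_trans ap_le1 _; rewrite ler1n subn_gt0.
rewrite -(ler_pM2l (ltr0Sn R k)) [leRHS]mulrA -natrM mul_bin_left natrM -mulrA.
by rewrite [leLHS]mulrCA [leRHS]mulrCA ler_wpM2l.
Qed.

Lemma coefs_ge0_linX_exp c d m : 0 <= c -> 0 <= d -> coefs_ge0 (linX c d ^+ m).
Proof.
by move=> c_ge0 d_ge0 k; rewrite coef_linX_exp !mulr_ge0 ?ler0n ?exprn_ge0.
Qed.

Lemma le1_of_mulSn_le1 p a : 0 <= p -> a.+1%:R * p <= 1 -> p <= 1.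
Proof. by move=> p_ge0; apply: le_trans; rewrite ler_peMl // ler1n. Qed.

Lemma coefs_nondecr_linX_exp p a : 0 <= p -> a.+1%:R * p <= 1 ->
  coefs_nondecr_upto (linX p (1 - p) ^+ a) a.
Proof.
move=> p_ge0 ap_le1 k lt_ka; rewrite !coef_linX_exp.
have q_ge0 : 0 <= 1 - p by rewrite subr_ge0 (le1_of_mulSn_le1 p_ge0 ap_le1).
rewrite -(subnSK lt_ka) !exprS.
set W := (1 - p) ^+ k * p ^+ (a - k.+1).
have -> : 'C(a, k)%:R * (1 - p) ^+ k * (p * p ^+ (a - k.+1)) =
    W * ('C(a, k)%:R * p) by rewrite /W; ring.
have -> : 'C(a, k.+1)%:R * ((1 - p) * (1 - p) ^+ k) * p ^+ (a - k.+1) =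
    W * ('C(a, k.+1)%:R * (1 - p)) by rewrite /W; ring.
by rewrite ler_wpM2l ?mulr_ge0 ?exprn_ge0 ?binomial_ratio_ge.
Qed.

Lemma coef_mul_linX_swap_le g c d j : 0 <= g`_0 -> coefs_nondecr_upto g j ->
  c <= d -> (g * linX c d)`_j <= (g * linX d c)`_j.
Proof.
move=> g0_ge0 g_incr le_cd; rewrite !coef_mul_linX.
case: j g_incr => [|k] g_incr; first by rewrite !addr0 ler_wpM2r.
rewrite -subr_ge0.
have -> : d * g`_k.+1 + c * g`_k - (c * g`_k.+1 + d * g`_k) =
    (d - c) * (g`_k.+1 - g`_k) by ring.
by rewrite mulr_ge0 // subr_ge0 // g_incr.
Qed.

Section BitFlipPolynomials.
Variable p : R.
Hypothesis p_ge0 : 0 <= p.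
Let A := linX p (1 - p).
Let B := linX (1 - p) p.

Lemma mutation_poly_coefs_ge0_nondecr a b : a.+1%:R * p <= 1 ->
  coefs_ge0 (A ^+ a * B ^+ b) /\ coefs_nondecr_upto (A ^+ a * B ^+ b) a.
Proof.
move=> ap_le1.
have q_ge0 : 0 <= 1 - p by rewrite subr_ge0 (le1_of_mulSn_le1 p_ge0 ap_le1).
elim: b => [|b [S_ge0 S_incr]].
  by rewrite expr0 mulr1; split; [apply: coefs_ge0_linX_exp | apply: coefs_nondecr_linX_exp].
rewrite exprSr mulrA; split; first exact: coefs_ge0_mul_linX.
exact: coefs_nondecr_mul_linX.
Qed.

Lemma coef_mutation_poly_exchange a b j : a.+1%:R * p <= 1 -> (j < a)%N ->
  (A ^+ a.+1 * B ^+ b)`_j <= (A ^+ a * B ^+ b.+1)`_j.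
Proof.
move=> ap_le1 lt_ja.
have [S_ge0 S_incr] := mutation_poly_coefs_ge0_nondecr b ap_le1.
have le_pq : p <= 1 - p.
  rewrite lerBrDr -mulr2n -mulr_natl; apply: le_trans ap_le1.
  by rewrite ler_wpM2r // ler_nat ltnS (leq_ltn_trans _ lt_ja).
rewrite exprSr mulrAC exprSr mulrA.
apply: coef_mul_linX_swap_le => // k lt_kj.
exact/S_incr/(ltn_trans lt_kj).
Qed.

Lemma coef_mutation_poly_antitone m a a' j : (a <= a' <= m)%N ->
  a'%:R * p <= 1 -> (j < a)%N ->
  (A ^+ a' * B ^+ (m - a'))`_j <= (A ^+ a * B ^+ (m - a))`_j.
Proof.
move=> /andP[+ le_a'm] + lt_ja; elim: a' le_a'm => [|a' IHa'] le_a'm le_aa' a'p_le1.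
  by rewrite leqn0 in le_aa'; rewrite (eqP le_aa').
have [le_aa'' | ] := leqP a a'; last first.
  by move=> lt_a'a; have -> : a = a'.+1 by apply/anti_leq; rewrite le_aa' lt_a'a.
apply: le_trans (IHa' (ltnW le_a'm) le_aa'' _); last first.
  apply: le_trans a'p_le1; rewrite ler_wpM2r // ler_nat //.
rewrite -(subnSK le_a'm).
exact: coef_mutation_poly_exchange (leq_trans lt_ja le_aa'').
Qed.

End BitFlipPolynomials.

End Monotonicity.

Unset Implicit Arguments.

Theorem lemma9 (R : realFieldType) (n : nat) (hn : (1 <= n)%N)
  (x xt : {ffun 'I_n -> bool}) (hx : (ones x <= ones xt)%N)
  (j : nat) (hj : (j < ones x)%N) :
  prob_ones R xt j <= prob_ones R x j.
Proof.
rewrite !prob_ones_coef; set p := (n%:R : R)^-1.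
have p_ge0 : 0 <= p by rewrite invr_ge0 ler0n.
have ones_xt_le_n : (ones xt <= n)%N by have := max_card [set i | xt i]; rewrite card_ord.
apply: coef_mutation_poly_antitone => //; first by rewrite hx.
by rewrite mulrC ler_pdivrMl ?ltr0n // mulr1 ler_nat.
Qed.
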